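(* Let $\Gamma$ be an elliptic graph, $v_0$ an end-vertex of $\Gamma$, and let $\Gamma_{new}$ be obtained from $\Gamma$ by attaching new vertices $v_1,\dots,v_s$ ($s\ge1$), each joined by a single edge to $v_0$ only, such that $\Gamma_{new}$ is an elliptic graph. Let $\check\ell\in Supp(\check P_0^\Gamma)$ and suppose $\Pi:=\{x\in Supp(\check P_0^{\Gamma_{new}}):\check\pi_{(\Gamma,\Gamma_{new})}(x)=\check\ell\}$ is nonempty. Then $$\sum_{x\in\Pi}z^{\Gamma_{new}}(x)=z^{\Gamma}(\check\ell).$$
   Context: For a decorated tree $G$ (vertex set $\mathcal V(G)$, integer decorations $e_v$, genera zero, negative definite form on $L(G)=\mathbb Z\langle E_v\rangle$ with $(E_v,E_v)=e_v$, $(E_v,E_w)=1$ for adjacent $v\ne w$, $0$ otherwise) let $L'(G)=\{l'\in L(G)\otimes\mathbb Q:(l',L(G))\subset\mathbb Z\}$, $E_v^*$ with $(E_v^*,E_w)=-\delta_{vw}$, $\delta_v$ the valency, $E^G=\sum E_v$, $Z_K^G$ with $(Z_K^G,E_v)=e_v+2$, $\chi(l')=-(l',l'-Z_K^G)/2$; $\ge$ coordinatewise, $\prec$ strict in all coordinates, $l>0$ if $l\ge0,l\ne0$. $Z^G(\mathbf t)=\sum_{l'}z^G(l')\mathbf t^{l'}$ is the Taylor expansion at $0$ of $\prod_v(1-\mathbf t^{E_v^*})^{\delta_v-2}$ ($\mathbf t^{l'}=\prod t_v^{l'_v}$). The set of dual exponents is $Supp(\check P_0^G)=\{Z^G_K-E^G-\ell:\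 \ell\in L(G),\ \ell\not\prec0,\ z^G(Z^G_K-E^G-\ell)\ne0\}$. $G$ is elliptic if $e_v\le-2$ for all $v$ and $\min_{l\in L(G),l>0}\chi(l)=0$. An end-vertex of $\Gamma$ is a vertex of valency 1 in $\Gamma$. For a connected full subgraph $\Gamma'\subset\Gamma''$, $\check\pi_{(\Gamma',\Gamma'')}(x)=Z_K^{\Gamma'}-E^{\Gamma'}-(Z_K^{\Gamma''}-E^{\Gamma''}-x)|_{\Gamma'}$, where $|_{\Gamma'}$ restricts coefficients to vertices of $\Gamma'$. *)

From HB Require Import structures.
From mathcomp Require Import all_boot all_order all_algebra.
From Stdlib Require Import ClassicalEpsilon.
Set Implicit Arguments. Unset Strict Implicit. Unset Printing Implicit Defensive.
Import Order.TTheory GRing.Theory Num.Theory.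
Local Open Scope ring_scope.

(* A decorated graph: finite vertex type V, adjacency relation adj,
   integer decorations e (all genera are zero). Vectors of L(G) (x) Q are
   finite functions V -> rat, written in the basis (E_v)_v. *)
Section DecoratedGraph.
Variables (V : finType) (adj : rel V) (e : V -> int).

Definition valency (v : V) : nat := #|[set w | adj v w]|.

(* simple tree: nonempty, symmetric irreflexive, connected, #|E| = #|V|-1
   (edges counted as ordered pairs, hence 2(#|V|-1)) *)
Definition is_tree : Prop :=
  [/\ (0 < #|V|)%N, symmetric adj, irreflexive adj,
      (forall x y, connect adj x y) &
      #|[set p : V * V | adj p.1 p.2]| = (2 * (#|V| - 1))%N].

Definition imat (v w : V) : rat :=
  if v == w then (e v)%:~R else if adj v w then 1 else 0.

Definition form (x y : {ffun V -> rat}) : rat :=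
  \sum_(v : V) \sum_(w : V) x v * imat v w * y w.

Definition basisE (w : V) : {ffun V -> rat} := [ffun u => (u == w)%:R].

Definition neg_def : Prop :=
  forall x : {ffun V -> rat}, x != [ffun => 0] -> form x x < 0.

(* the (unique, under neg_def) x with (x, E_w) = c w for all w *)
Definition dual_sol (c : V -> rat) : {ffun V -> rat} :=
  epsilon (inhabits [ffun => 0]) (fun x => forall w, form x (basisE w) = c w).

Definition Estar (v : V) : {ffun V -> rat} := dual_sol (fun w => - (v == w)%:R).

Definition ZK : {ffun V -> rat} := dual_sol (fun w => (e w)%:~R + 2).

Definition chi (x : {ffun V -> rat}) : rat :=
  - form x [ffun u => x u - ZK u] / 2.

Definition latv (l : {ffun V -> int}) : {ffun V -> rat} := [ffun v => (l v)%:~R].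

Definition decorated_tree : Prop := is_tree /\ neg_def.

Definition elliptic : Prop :=
  [/\ decorated_tree,
      (forall v, e v <= -2),
      (exists l : {ffun V -> int},
          [/\ (forall v, 0 <= l v), (exists v, l v != 0) & chi (latv l) = 0]) &
      (forall l : {ffun V -> int}, (forall v, 0 <= l v) -> (exists v, l v != 0) ->
          0 <= chi (latv l))].

(* coefficient of x^k in (1 - x)^n, n integer *)
Definition binc (n : int) (k : nat) : rat :=
  match n with
  | Posz m => (-1) ^+ k * ('C(m, k))%:R
  | Negz m => ('C(m + k, k))%:R   (* n = -(m+1) *)
  end.

(* Taylor coefficient z(x) of prod_v (1 - t^{Estar_v})^{delta_v - 2}:
   sum over k : V -> nat with sum_v k_v Estar_v = x of prod_v binc (delta_v-2) k_v.
   Any such k satisfies k_v (Estar_v)_v <= x_v (the Estar_v have positive entries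
   for a negative definite tree), so k_v <= zbound x and the finite sum below
   ranges over all contributing k. *)
Definition zbound (x : {ffun V -> rat}) : nat :=
  (\max_(v : V) absz (Num.floor (x v / Estar v v)))%N.

Definition zcoef (x : {ffun V -> rat}) : rat :=
  \sum_(k : {ffun V -> 'I_(zbound x).+1} |
          [forall w, \sum_(v : V) (k v : nat)%:R * Estar v w == x w])
     \prod_(v : V) binc ((valency v)%:Z - 2) (k v).

Definition inSupp (x : {ffun V -> rat}) : Prop :=
  exists l : {ffun V -> int},
    [/\ (forall v, x v = ZK v - 1 - (l v)%:~R), ~ (forall v, l v < 0) & zcoef x != 0].

End DecoratedGraph.

Definition attach_adj (V : finType) (adj : rel V) (v0 : V) (s : nat) : rel (V + 'I_s) :=
  fun a b => match a, b with
             | inl x, inl y => adj x y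
             | inl x, inr _ => x == v0
             | inr _, inl y => y == v0
             | inr _, inr _ => false
             end.
Arguments attach_adj {V} adj v0 s.

Definition attach_dec (V : finType) (s : nat) (e : V -> int) (f : 'I_s -> int)
  : V + 'I_s -> int :=
  fun a => match a with inl x => e x | inr i => f i end.

Definition check_pi (V : finType) (adj : rel V) (e : V -> int) (v0 : V) (s : nat)
  (f : 'I_s -> int) (x : {ffun (V + 'I_s) -> rat}) : {ffun V -> rat} :=
  [ffun v => ZK adj e v - 1
              - (ZK (attach_adj adj v0 s) (attach_dec e f) (inl v) - 1 - x (inl v))].

(* For a negative definite tree the E*_w form a basis, so a Taylor coefficient is a
   single product: if x = Z_K - E - L = sum_w c_w E*_w then c_w = delta_w - 2 + (L, E_w)
   and z(x) = prod_w [t^(c_w)] (1 - t)^(delta_w - 2).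
   A point of the fiber over Z_K - E - L is fixed by integers t_i, its coefficients at
   the new vertices v_i. Attaching the v_i changes only the factor at v0, whose exponent
   becomes s - 1, and adds at v_i the factor [t^(L_v0 - 1 + t_i e_vi)] (1 - t)^(-1), which
   is 1 if t_i <= cap_i := floor((L_v0 - 1) / - e_vi) and 0 otherwise. Putting
   t_i = cap_i - j_i with j_i >= 0, the sum over the fiber of the factors at v0 is the
   coefficient of t^(c_v0 + s + sum_i cap_i) in (1 - t)^(s-1) / (1 - t)^s = 1 / (1 - t),
   namely 1. In Gamma the factor at the end-vertex v0 is [t^(c_v0)] (1 - t)^(-1) = 1, so
   both sides are the product of the factors away from v0. *)

From Pilot Require Import Defs.
From HB Require Import structures.
From mathcomp Require Import all_boot all_order all_algebra.
From mathcomp Require Import ring lra zify.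
From Stdlib Require Import ClassicalEpsilon.
Import Order.TTheory GRing.Theory Num.Theory.
Local Open Scope ring_scope.
Set Implicit Arguments. Unset Strict Implicit. Unset Printing Implicit Defensive.

Definition bincz (n k : int) : rat := if k < 0 then 0 else binc n `|k|%N.

Section NegativeDefiniteForm.
Variables (W : finType) (adj : rel W) (e : W -> int).
Hypotheses (adj_sym : symmetric adj) (adj_irr : irreflexive adj).
Hypothesis negdef : neg_def adj e.

Definition form_at (x : {ffun W -> rat}) (w : W) : rat := \sum_v x v * imat adj e v w.

Lemma form_basisE x w : Defs.form adj e x (basisE w) = form_at x w.
Proof.
apply: eq_bigr => v _; rewrite (bigD1 w) //= ffunE eqxx mulr1 big1 ?addr0 // => u /negbTE uw.
by rewrite ffunE uw mulr0.
Qed.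

Lemma form_sum_at x y : Defs.form adj e x y = \sum_w form_at x w * y w.
Proof.
rewrite /Defs.form exchange_big; apply: eq_bigr => w _; rewrite /form_at mulr_suml.
exact: eq_bigr.
Qed.

Lemma form_atB x y w : form_at (x - y) w = form_at x w - form_at y w.
Proof. by rewrite /form_at -sumrB; apply: eq_bigr => v _; rewrite !ffunE mulrBl. Qed.

Lemma form_at_lincomb (I : Type) (r : seq I) (c : I -> rat) (y : I -> {ffun W -> rat}) w :
  form_at [ffun u => \sum_(i <- r) c i * y i u] w = \sum_(i <- r) c i * form_at (y i) w.
Proof.
rewrite /form_at; under eq_bigr do rewrite ffunE mulr_suml.
rewrite exchange_big; apply: eq_bigr => i _; rewrite mulr_sumr.
by apply: eq_bigr => v _; rewrite mulrA.
Qed.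

Lemma form_at_inj x y : (forall w, form_at x w = form_at y w) -> x = y.
Proof.
move=> xy; apply/eqP; rewrite -subr_eq0; apply/negPn/negP => /negdef.
by rewrite form_sum_at big1 ?ltxx // => w _; rewrite form_atB xy subrr mul0r.
Qed.

Lemma form_at_surj (c : W -> rat) : exists x, forall w, form_at x w = c w.
Proof.
pose A : 'M[rat]_#|W| := \matrix_(i, j) imat adj e (enum_val i) (enum_val j).
pose tofun (r : 'rV[rat]_#|W|) : {ffun W -> rat} := [ffun v => r 0 (enum_rank v)].
have mulA r j : (r *m A) 0 j = form_at (tofun r) (enum_val j).
  rewrite !mxE /form_at (reindex (@enum_val W predT)); last first.
    by apply: onW_bij; apply: enum_val_bij.
  by apply: eq_bigr => i _; rewrite ffunE enum_valK mxE.
have A_unit : A \in unitmx.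
  rewrite -row_free_unit; apply: inj_row_free => r rA0.
  have r0 : tofun r = 0.
    by apply: form_at_inj => w; rewrite -(enum_rankK w) -mulA rA0 mxE /form_at big1 // => v _;
       rewrite ffunE mul0r.
  apply/matrixP => i j; rewrite (ord1 i) mxE.
  by have := congr1 (fun g : {ffun W -> rat} => g (enum_val j)) r0; rewrite !ffunE enum_valK.
exists (tofun ((\row_j c (enum_val j)) *m invmx A)) => w.
by rewrite -(enum_rankK w) -mulA mulmxKV // mxE.
Qed.

Lemma dual_solP c w : form_at (dual_sol adj e c) w = c w.
Proof.
rewrite -form_basisE /dual_sol.
set P := fun x => forall w, Defs.form adj e x (basisE w) = c w.
suff /(_ w) : P (epsilon (inhabits 0) P) by [].
have [x xc] := form_at_surj c.
by apply: epsilon_spec; exists x => u; rewrite form_basisE.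
Qed.

Lemma form_at_Estar v w : form_at (Estar adj e v) w = - (v == w)%:R.
Proof. exact: dual_solP. Qed.

Lemma form_at_ZK w : form_at (ZK adj e) w = (e w)%:~R + 2.
Proof. exact: dual_solP. Qed.

Lemma form_at_Estar_comb (c : W -> rat) u :
  form_at [ffun w => \sum_v c v * Estar adj e v w] u = - c u.
Proof.
rewrite form_at_lincomb (bigD1 u) //= big1 ?addr0 => [|v /negbTE vu].
  by rewrite form_at_Estar eqxx mulrN1.
by rewrite form_at_Estar vu oppr0 mulr0.
Qed.

Lemma Estar_decomp x : x = [ffun u => \sum_w - form_at x w * Estar adj e w u].
Proof. by apply: form_at_inj => u; rewrite form_at_Estar_comb opprK. Qed.

Lemma imat_sym v w : imat adj e v w = imat adj e w v.
Proof. by rewrite /imat eq_sym adj_sym; case: eqP => // ->. Qed.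

Lemma form_sum_at_r x y : Defs.form adj e x y = \sum_v x v * form_at y v.
Proof.
apply: eq_bigr => v _; rewrite /form_at mulr_sumr.
by apply: eq_bigr => w _; rewrite imat_sym mulrCA mulrC.
Qed.

(* Write y = P - N with P, N >= 0 of disjoint supports. Off the diagonal the
   intersection matrix is >= 0, so (N, P) >= 0, while (N, y) = - N v <= 0;
   hence (N, N) >= 0 and N = 0 by negative definiteness. *)
Lemma Estar_ge0 v u : 0 <= Estar adj e v u.
Proof.
set y := Estar adj e v.
pose N : {ffun W -> rat} := [ffun a => if y a < 0 then - y a else 0].
pose P : {ffun W -> rat} := [ffun a => if y a < 0 then 0 else y a].
have yPN : y = P - N.
  by apply/ffunP => a; rewrite !ffunE; case: ifP; rewrite ?opprK ?add0r ?subr0.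
have N_ge0 a : 0 <= N a by rewrite ffunE; case: ltP => // /ltW; rewrite oppr_ge0.
have NyE : Defs.form adj e N y = - N v.
  rewrite form_sum_at_r (bigD1 v) //= big1 ?addr0 => [|a /negbTE av].
    by rewrite form_at_Estar eqxx mulrN1.
  by rewrite form_at_Estar eq_sym av oppr0 mulr0.
have P_ge0 a : 0 <= P a by rewrite ffunE; case: ltP.
have NP_ge0 : 0 <= Defs.form adj e N P.
  apply: sumr_ge0 => a _; apply: sumr_ge0 => b _.
  case: (eqVneq a b) => [<-|ab]; first by rewrite !ffunE; case: ifP; rewrite ?mulr0 ?mul0r.
  by rewrite !mulr_ge0 // /imat (negbTE ab); case: adj.
have NN_ge0 : 0 <= Defs.form adj e N N.
  have : Defs.form adj e N y = Defs.form adj e N P - Defs.form adj e N N.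
    by rewrite yPN !form_sum_at_r -sumrB; apply: eq_bigr => a _; rewrite form_atB mulrBr.
  by rewrite NyE; have := N_ge0 v; lra.
have N0 : N = 0 by apply/eqP; apply: contraTT NN_ge0 => /negdef; rewrite -ltNge.
have := congr1 (fun g : {ffun W -> rat} => g u) N0; rewrite !ffunE; case: ltP => // yu /eqP.
by rewrite oppr_eq0 => /eqP yu0; move: yu; rewrite yu0 ltxx.
Qed.

Lemma Estar_diag_gt0 v : 0 < Estar adj e v v.
Proof.
set y := Estar adj e v.
have yyE : Defs.form adj e y y = - y v.
  rewrite form_sum_at (bigD1 v) //= big1 ?addr0 => [|a /negbTE av].
    by rewrite form_at_Estar eqxx mulN1r.
  by rewrite form_at_Estar eq_sym av oppr0 mul0r.
have y_neq0 : y != 0.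
  apply/eqP => y0; have := form_at_Estar v v; rewrite -/y y0 eqxx.
  by rewrite /form_at big1 => [/eqP|w _]; rewrite ?ffunE ?mul0r // eq_sym oppr_eq0 oner_eq0.
by have := negdef y_neq0; rewrite yyE oppr_lt0.
Qed.

Lemma zbound_ge (x : {ffun W -> rat}) u (n : nat) :
  n%:R * Estar adj e u u <= x u -> (n <= zbound adj e x)%N.
Proof.
rewrite -ler_pdivlMr ?Estar_diag_gt0 // -[n%:R]/(n%:Z%:~R : rat) -floor_ge_int => n_le.
apply: leq_trans (leq_bigmax u); move: n_le; move: (Num.floor _) => z; lia.
Qed.

Lemma Estar_comb_eqP x (k : W -> rat) :
  (forall w, - form_at x w = k w) <-> x = [ffun u => \sum_v k v * Estar adj e v u].
Proof.
split=> [xk | ->]; last by move=> w; rewrite form_at_Estar_comb opprK.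
by rewrite {1}(Estar_decomp x); apply/ffunP => u; rewrite !ffunE; apply: eq_bigr => v _; rewrite xk.
Qed.

(* As the E*_v form a basis, the sum defining zcoef has at most one term, at k. *)
Lemma zcoef_coordE x (k : W -> int) : (forall w, - form_at x w = (k w)%:~R) ->
  zcoef adj e x = \prod_w bincz ((valency adj w)%:Z - 2) (k w).
Proof.
move=> xk; have xE := proj1 (Estar_comb_eqP x _) xk.
have solP (n : {ffun W -> 'I_(zbound adj e x).+1}) :
    [forall w, \sum_v (n v : nat)%:R * Estar adj e v w == x w] = [forall v, k v == n v].
  apply/forallP/forallP => [sol v | kn w].
    have /Estar_comb_eqP/(_ v) : x = [ffun u => \sum_v (n v : nat)%:R * Estar adj e v u].
      by apply/ffunP => u; rewrite ffunE (eqP (sol u)).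
    by rewrite xk => /eqP; rewrite -[_%:R]/((n v : nat)%:Z%:~R) eqr_int.
  by apply/eqP; rewrite [in RHS]xE ffunE; apply: eq_bigr => v _; rewrite (eqP (kn v)).
have [k_ge0 | /forallPn [w kw_lt0]] := boolP [forall v, 0 <= k v]; last first.
  rewrite (bigD1 w) //= /bincz ltNge kw_lt0 mul0r /zcoef big_pred0 // => n.
  by rewrite solP; apply/forallP => /(_ w) /eqP kn; rewrite kn in kw_lt0.
have kE v : k v = `|k v|%N by rewrite gez0_abs // (forallP k_ge0).
have k_lt v : (`|k v| < (zbound adj e x).+1)%N.
  rewrite ltnS; apply: (zbound_ge (u := v)); rewrite xE ffunE (bigD1 v) //= {2}kE lerDl.
  by apply: sumr_ge0 => w _; rewrite mulr_ge0 ?Estar_ge0 // ler0z (forallP k_ge0).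
rewrite /zcoef (big_pred1 [ffun v => inord `|k v|]) => [|n /=].
  by apply: eq_bigr => v _; rewrite /bincz ltNge (forallP k_ge0) ffunE inordK.
rewrite solP; apply/forallP/eqP => [kn | -> v]; last by rewrite ffunE inordK // -kE.
by apply/ffunP => v; apply: val_inj; rewrite ffunE /= inordK // (eqP (kn v)).
Qed.

Definition imat_int v w : int := if v == w then e v else if adj v w then 1 else 0.

Lemma imat_intE v w : imat adj e v w = (imat_int v w)%:~R.
Proof. by rewrite /imat /imat_int; case: eqP => //; case: adj. Qed.

Definition zk_shift (L : {ffun W -> int}) : {ffun W -> rat} :=
  [ffun v => ZK adj e v - 1 - (L v)%:~R].

Definition zk_coord (L : {ffun W -> int}) w : int :=
  (valency adj w)%:Z - 2 + \sum_v L v * imat_int v w.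

Lemma zk_shift_inj : injective zk_shift.
Proof.
move=> L1 L2 /ffunP L12; apply/ffunP => v; apply: (@intr_inj rat).
by have := L12 v; rewrite !ffunE => /eqP; rewrite !(inj_eq (subrI _)) => /eqP.
Qed.

Lemma inSupp_zk_shift x : inSupp adj e x <->
  exists L, [/\ x = zk_shift L, ~ (forall v, L v < 0) & zcoef adj e x != 0].
Proof.
split=> -[L [xL L_neg zx]]; exists L; split=> //; last by move=> v; rewrite xL ffunE.
by apply/ffunP => v; rewrite ffunE.
Qed.

Lemma form_at_one w : form_at [ffun => 1] w = (e w)%:~R + (valency adj w)%:R.
Proof.
rewrite /valency -sum1_card natr_sum big_mkcond /form_at (bigD1 w) //= ffunE mul1r.
rewrite /imat eqxx [in RHS](bigD1 w) //= inE adj_irr add0r; congr (_ + _).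
apply: eq_bigr => v vw; rewrite ffunE mul1r inE (negbTE vw) adj_sym.
by case: adj.
Qed.

Lemma zk_coordE L w : - form_at (zk_shift L) w = (zk_coord L w)%:~R.
Proof.
have -> : zk_shift L = ZK adj e - [ffun => 1] - [ffun v => (L v)%:~R].
  by apply/ffunP => v; rewrite !ffunE.
rewrite !form_atB form_at_ZK form_at_one /zk_coord intrD intrB rmorph_sum /=.
rewrite [X in _ - X](_ : _ = \sum_v ((L v * imat_int v w)%:~R : rat)); first ring.
by apply: eq_bigr => v _; rewrite ffunE imat_intE intrM.
Qed.

Lemma zcoef_zk_shift L :
  zcoef adj e (zk_shift L) = \prod_w bincz ((valency adj w)%:Z - 2) (zk_coord L w).
Proof. exact/zcoef_coordE/zk_coordE. Qed.

End NegativeDefiniteForm.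

Lemma coef_one_subX_exp n k : ((1 - 'X) ^+ n : {poly rat})`_k = binc n k.
Proof.
elim: n k => [|n IHn] k.
  by rewrite expr0 coefC; case: k => [|k] /=; rewrite ?expr0 ?mul1r ?bin0n ?mulr0.
rewrite exprSr mulrBr mulr1 coefB coefMX !IHn; case: k => [|k] /=.
  by rewrite !expr0 !bin0 subr0.
by rewrite binS natrD exprS; ring.
Qed.

(* (1 - X)^(s-1) (1 + X + ... + X^(B-1))^s = (1 + X + ... + X^(B-1)) (1 - X^B)^(s-1),
   whose coefficients below X^B all equal 1. *)
Lemma sum_bincz_tuples (s B A : nat) : (0 < s)%N -> (A < B)%N ->
  \sum_(j : {ffun 'I_s -> 'I_B}) bincz s.-1 (A%:Z - (\sum_i (j i : nat))%N%:Z) = 1.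
Proof.
move=> s_gt0 AB; pose G : {poly rat} := \sum_(b < B) 'X^b.
have termE (j : {ffun 'I_s -> 'I_B}) :
    bincz s.-1 (A%:Z - (\sum_i (j i : nat))%N%:Z) = ((1 - 'X) ^+ s.-1 * \prod_i 'X^(j i))`_A.
  rewrite -(big_morph _ (exprD 'X) (expr0 'X)) coefMXn coef_one_subX_exp /bincz.
  by case: ltnP => ltA; [rewrite ifT //; lia | rewrite ifF; [congr binc; lia | lia]].
under eq_bigr do rewrite termE.
rewrite -coef_sum -mulr_sumr -(bigA_distr_bigA (fun (i : 'I_s) (b : 'I_B) => 'X^b)).
rewrite prodr_const card_ord -/G.
have GE : (1 - 'X) * G = 1 - 'X^B by rewrite -[1 - 'X]opprB mulNr -subrX1 opprB.
have [R RE] : exists R : {poly rat}, (1 - 'X^B) ^+ s.-1 = 1 + 'X^B * R.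
  have := subrX1 (1 - 'X^B : {poly rat}) s.-1; rewrite addrAC subrr add0r => XE.
  by exists (- \sum_(i < s.-1) (1 - 'X^B) ^+ i); rewrite mulrN -mulNr -XE subrKC.
have -> : G ^+ s = G * G ^+ s.-1 by rewrite -exprS prednK.
rewrite mulrCA -exprMn GE RE mulrDr mulr1 coefD mulrCA coefXnM AB addr0.
rewrite /G coef_sum (bigD1 (Ordinal AB)) //= coefXn eqxx big1 ?addr0 // => i.
by rewrite coefXn -val_eqE /= eq_sym => /negbTE ->.
Qed.

Lemma valency_sum (W : finType) (r : rel W) a : valency r a = (\sum_b r a b)%N.
Proof. by rewrite /valency -sum1_card big_mkcond; apply: eq_bigr => b _; rewrite inE. Qed.

Section Attach.
Variables (V : finType) (adj : rel V) (e : V -> int) (v0 : V) (s : nat) (f : 'I_s -> int).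
Local Notation adj' := (attach_adj adj v0 s).
Local Notation e' := (attach_dec e f).

Definition attach_lat (L : {ffun V -> int}) (t : 'I_s -> int) : {ffun V + 'I_s -> int} :=
  [ffun b => match b with inl v => L v | inr i => t i end].

Lemma valency_attach_inl w : valency adj' (inl w) = (valency adj w + (w == v0) * s)%N.
Proof. by rewrite !valency_sum big_sumType /= sum_nat_const card_ord mulnC. Qed.

Lemma valency_attach_inr i : valency adj' (inr i) = 1%N.
Proof.
rewrite valency_sum big_sumType /= [X in (_ + X)%N]big1 ?addn0 //.
by rewrite (bigD1 v0) //= eqxx big1 // => w /negbTE ->.
Qed.

Lemma zk_coord_attach_inl L t w :
  zk_coord adj' e' (attach_lat L t) (inl w) =
  zk_coord adj e L w + (w == v0)%:R * (s%:Z + \sum_i t i).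
Proof.
rewrite /zk_coord valency_attach_inl big_sumType /=.
have -> : \sum_i attach_lat L t (inr i) * imat_int adj' e' (inr i) (inl w) =
          (w == v0)%:R * \sum_i t i.
  rewrite mulr_sumr; apply: eq_bigr => i _; rewrite ffunE /imat_int /=.
  by case: (w == v0); rewrite ?mulr1 ?mul1r ?mulr0 ?mul0r.
under eq_bigr do rewrite ffunE.
by case: (w == v0); rewrite /= ?muln1 ?muln0 ?addn0 ?mul1r ?mul0r ?addr0 // PoszD; ring.
Qed.

Lemma zk_coord_attach_inr L t i :
  zk_coord adj' e' (attach_lat L t) (inr i) = L v0 - 1 + t i * f i.
Proof.
rewrite /zk_coord valency_attach_inr big_sumType /= (bigD1 v0) //= big1 => [|v /negbTE vv0].
  rewrite addr0 (bigD1 i) //= big1 => [|j /negbTE ji]; last first.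
    by rewrite /imat_int /= ffunE -[inr j == _]/(j == i) ji mulr0.
  by rewrite /imat_int /= !ffunE !eqxx; ring.
by rewrite /imat_int /= vv0 mulr0.
Qed.

Lemma check_pi_zk_shift L' :
  check_pi adj e v0 f (zk_shift adj' e' L') = zk_shift adj e [ffun v => L' (inl v)].
Proof. by apply/ffunP => v; rewrite !ffunE; ring. Qed.

End Attach.

Lemma bincz_m1 k : bincz (-1) k = (0 <= k)%R%:R.
Proof. by rewrite /bincz leNgt; case: (k < 0) => //=; rewrite add0n binn. Qed.

Section Fiber.
Variables (V : finType) (adj : rel V) (e : V -> int) (v0 : V) (s : nat) (f : 'I_s -> int).
Local Notation adj' := (attach_adj adj v0 s).
Local Notation e' := (attach_dec e f).
Hypotheses (adj_sym : symmetric adj) (adj_irr : irreflexive adj) (negdef : neg_def adj e).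
Hypotheses (adj'_sym : symmetric adj') (adj'_irr : irreflexive adj') (negdef' : neg_def adj' e').
Hypotheses (v0_end : valency adj v0 = 1%N) (s_gt0 : (0 < s)%N) (f_lt0 : forall i, f i < 0).
Variable L : {ffun V -> int}.

Local Notation m := (zk_coord adj e L v0).
Local Notation zcoef' x := (zcoef adj' e' x).
Local Notation zk_lift t := (zk_shift adj' e' (attach_lat L t)).

Definition zcoef_off_v0 : rat :=
  \prod_(w | w != v0) bincz ((valency adj w)%:Z - 2) (zk_coord adj e L w).

Definition cap i : int := ((L v0 - 1) %/ - f i)%Z.

Lemma le_cap t i : (0 <= L v0 - 1 + t * f i) = (t <= cap i).
Proof. by rewrite /cap lez_divRL ?oppr_gt0 // -subr_ge0 mulrN opprK. Qed.

Lemma zcoef_zk_shift_v0 : zcoef adj e (zk_shift adj e L) = (0 <= m)%R%:R * zcoef_off_v0.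
Proof. by rewrite zcoef_zk_shift // (bigD1 v0) //= v0_end bincz_m1. Qed.

Lemma zcoef_attach t :
  zcoef' (zk_lift t) =
  bincz s.-1 (m + s%:Z + \sum_i t i) * zcoef_off_v0 * \prod_i (t i <= cap i)%R%:R.
Proof.
rewrite zcoef_zk_shift // big_sumType /= (bigD1 v0) //= zk_coord_attach_inl eqxx mul1r.
have -> : (valency adj' (inl v0))%:Z - 2 = s.-1.
  by rewrite valency_attach_inl v0_end eqxx mul1n; lia.
rewrite addrA; congr (_ * _ * _).
  apply: eq_bigr => w /negbTE wv0.
  by rewrite zk_coord_attach_inl valency_attach_inl wv0 mul0r addr0 mul0n addn0.
apply: eq_bigr => i _.
by rewrite zk_coord_attach_inr valency_attach_inr bincz_m1 le_cap.
Qed.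

Lemma zcoef_attach_neq0 t : zcoef' (zk_lift t) != 0 ->
  (forall i, t i <= cap i) /\ 0 <= m + s%:Z + \sum_i t i.
Proof.
rewrite zcoef_attach !mulf_eq0 !negb_or => /andP [/andP [bin_neq0 _] /prodf_neq0 t_le].
split=> [i | ]; first by move: (t_le i isT); case: (_ <= _)%R; rewrite ?eqxx.
by move: bin_neq0; rewrite /bincz leNgt; case: (_ < 0)%R; rewrite ?eqxx.
Qed.

Lemma fiberP x : ~ (forall v, L v < 0) ->
  inSupp adj' e' x /\ check_pi adj e v0 f x = zk_shift adj e L <->
  exists t, x = zk_lift t /\ zcoef' x != 0.
Proof.
move=> L_not_neg; split=> [[/inSupp_zk_shift [L' [-> _ zx]]] | [t [-> zx]]].
  rewrite check_pi_zk_shift => /zk_shift_inj L'L.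
  exists (fun i => L' (inr i)); split=> //; congr zk_shift.
  by apply/ffunP => -[v|i]; rewrite ffunE // -L'L ffunE.
split; last by rewrite check_pi_zk_shift; congr zk_shift; apply/ffunP => v; rewrite !ffunE.
apply/inSupp_zk_shift; exists (attach_lat L t); split=> // L'_neg.
by apply: L_not_neg => v; have := L'_neg (inl v); rewrite ffunE.
Qed.

Local Notation Ncap := (m + s%:Z + \sum_i cap i).

(* The nonzero coefficients of the fiber sit at t = cap - j with j >= 0 and
   sum_i j i <= Ncap. *)
Definition fiber_point (j : {ffun 'I_s -> 'I_(`|Ncap|).+1}) : {ffun V + 'I_s -> rat} :=
  zk_lift (fun i => cap i - (j i : nat)%:Z).

Lemma zcoef_fiber_point j :
  zcoef' (fiber_point j) = bincz s.-1 (Ncap - (\sum_i (j i : nat))%N%:Z) * zcoef_off_v0.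
Proof.
rewrite zcoef_attach [X in _ * X]big1 ?mulr1 => [|i _]; last by rewrite gerDl oppr_le0.
have -> : (\sum_i (j i : nat))%N%:Z = \sum_i (j i : nat)%:Z.
  by rewrite -natz natr_sum; apply: eq_bigr => i _; rewrite natz.
by rewrite sumrB addrA.
Qed.

Lemma fiber_point_inj : injective fiber_point.
Proof.
move=> j1 j2 /zk_shift_inj/ffunP j12; apply/ffunP => i; apply: val_inj.
by have := j12 (inr i); rewrite !ffunE => /addrI/oppr_inj [].
Qed.

Lemma fiber_point_surj t : zcoef' (zk_lift t) != 0 -> exists j, zk_lift t = fiber_point j.
Proof.
move=> /zcoef_attach_neq0 [t_le sum_ge0].
have t_bound i : 0 <= cap i - t i <= Ncap.
  have sum_le : \sum_k (cap k - t k) <= Ncap.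
    by rewrite sumrB -subr_ge0 (_ : _ - _ = m + s%:Z + \sum_k t k) //; ring.
  rewrite subr_ge0 t_le /=; apply: le_trans sum_le.
  by rewrite (bigD1 i) //= lerDl sumr_ge0 // => k _; rewrite subr_ge0.
exists [ffun i => inord `|cap i - t i|]; congr zk_shift; apply/ffunP => -[v|i]; rewrite !ffunE //.
have /andP [lo hi] := t_bound i.
rewrite inordK; first by rewrite gez0_abs // subKr.
by rewrite ltnS -lez_nat !gez0_abs // (le_trans lo).
Qed.

Lemma sum_zcoef_fiber_point : 0 <= Ncap -> \sum_j zcoef' (fiber_point j) = zcoef_off_v0.
Proof.
move=> Ncap_ge0; have NcapE : Ncap = `|Ncap|%N by rewrite gez0_abs.
under eq_bigr do rewrite zcoef_fiber_point [X in bincz _ (X - _)]NcapE.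
by rewrite -mulr_suml sum_bincz_tuples // mul1r.
Qed.

Lemma fiber_sum : ~ (forall v, L v < 0) -> zcoef adj e (zk_shift adj e L) != 0 ->
  (exists x, inSupp adj' e' x /\ check_pi adj e v0 f x = zk_shift adj e L) ->
  exists S : seq {ffun V + 'I_s -> rat},
    [/\ uniq S,
        (forall x, x \in S <-> inSupp adj' e' x /\ check_pi adj e v0 f x = zk_shift adj e L) &
        \sum_(x <- S) zcoef' x = zcoef adj e (zk_shift adj e L)].
Proof.
move=> L_not_neg zL [x0 /(fiberP _ L_not_neg) [t0 [x0E zx0]]].
have Ncap_ge0 : 0 <= Ncap.
  rewrite x0E in zx0; have [t_le sum_ge0] := zcoef_attach_neq0 zx0.
  by apply: le_trans sum_ge0 _; rewrite lerD2l; apply: ler_sum => i _.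
have m_ge0 : 0 <= m.
  by move: zL; rewrite zcoef_zk_shift_v0; case: (0 <= m)%R; rewrite ?mul0r ?eqxx.
exists [seq fiber_point j | j <- enum [pred j | zcoef' (fiber_point j) != 0]]; split.
- by rewrite map_inj_uniq ?enum_uniq //; apply: fiber_point_inj.
- move=> x; rewrite fiberP //; split=> [/mapP [j] | [t [-> zt]]].
    by rewrite mem_enum inE => zj ->; exists (fun i => cap i - (j i : nat)%:Z).
  have [j tj] := fiber_point_surj zt.
  by apply/mapP; exists j; rewrite // mem_enum inE -tj.
- rewrite big_map big_enum /= zcoef_zk_shift_v0 m_ge0 mul1r -sum_zcoef_fiber_point //.
  by rewrite big_mkcond; apply: eq_bigr => j _; rewrite inE; case: eqP.
Qed.

End Fiber.

Unset Implicit Arguments.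
Set Strict Implicit.

Theorem mainTheorem6 (V : finType) (adj : rel V) (e : V -> int) (v0 : V)
  (s : nat) (f : 'I_s -> int) (l : {ffun V -> rat}) :
  elliptic adj e ->
  valency adj v0 = 1%N ->
  (0 < s)%N ->
  elliptic (attach_adj adj v0 s) (attach_dec e f) ->
  inSupp adj e l ->
  (exists x, inSupp (attach_adj adj v0 s) (attach_dec e f) x
             /\ check_pi adj e v0 f x = l) ->
  exists S : seq {ffun (V + 'I_s) -> rat},
    [/\ uniq S,
        (forall x, x \in S <-> (inSupp (attach_adj adj v0 s) (attach_dec e f) x
                                /\ check_pi adj e v0 f x = l)) &
        \sum_(x <- S) zcoef (attach_adj adj v0 s) (attach_dec e f) x = zcoef adj e l].
Proof.
move=> [[[_ adj_sym adj_irr _ _] negdef] _ _ _] v0_end s_gt0.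
move=> [[[_ adj'_sym adj'_irr _ _] negdef'] e'_le _ _] /inSupp_zk_shift [L [-> L_not_neg zL]].
apply: fiber_sum => // i.
by apply: le_lt_trans (e'_le (inr i)) _.
Qed.
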